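(* Let $f:\mathbb{R}^d\to\mathbb{R}$ be $L$-smooth (i.e. $\nabla f$ is $L$-Lipschitz in $\ell_2$). Let $\varepsilon>0$, $c_\infty>0$, $\lambda>0$, $\mu\in[0,1)$, and set $\lambda_k:=\lambda(1-\mu)^k$. Let $(\mathbf{n}_k)_{k\ge0}$ be vectors with nonnegative entries such that for all $k$ and all coordinates $i$: $\sqrt{(\mathbf{n}_k)_i}+\varepsilon\le c_\infty$ and $\dfrac{\sqrt{(\mathbf{n}_k)_i}+\varepsilon}{\sqrt{(\mathbf{n}_{k+1})_i}+\varepsilon}\ge 1-\mu$. Define $F_k(\boldsymbol{\theta}):=f(\boldsymbol{\theta})+\frac{\lambda_k}{2}\|\boldsymbol{\theta}\|^2_{\sqrt{\mathbf{n}_k}}$. Given $\boldsymbol{\theta}_k,\mathbf{u}_k\in\mathbb{R}^d$, let $$\boldsymbol{\theta}_{k+1}=\arg\min_{\boldsymbol{\theta}}\Big(\tfrac{\lambda_k}{2}\|\boldsymbol{\theta}\|^2_{\sqrt{\mathbf{n}_k}}+f(\boldsymbol{\theta}_k)+\langle\mathbf{u}_k,\boldsymbol{\theta}-\boldsymbol{\theta}_k\rangle+\tfrac{1}{2\eta}\|\boldsymbol{\theta}-\boldsymbol{\theta}_k\|^2_{\sqrt{\mathbf{n}_k}}\Big)$$ with $0<\eta\le\min\{\frac{\varepsilon}{3L},\frac{1}{10\lambda}\}$. Then, with $\mathbf{g}_k:=\nabla f(\boldsymbol{\theta}_k)$ and $\tilde{\boldsymbol{\theta}}_k:=(\sqrt{\mathbf{n}_k}+\varepsilon)\circ\boldsymbol{\theta}_k$,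 $$F_{k+1}(\boldsymbol{\theta}_{k+1})\le F_k(\boldsymbol{\theta}_k)-\frac{\eta}{4c_\infty}\|\mathbf{u}_k+\lambda_k\tilde{\boldsymbol{\theta}}_k\|^2+\frac{\eta}{2\varepsilon}\|\mathbf{g}_k-\mathbf{u}_k\|^2.$$
   Context: For a vector $\mathbf{n}\ge0$ (entrywise) and $\varepsilon>0$, $\|\mathbf{x}\|^2_{\sqrt{\mathbf{n}}}:=\langle\mathbf{x},(\sqrt{\mathbf{n}}+\varepsilon)\circ\mathbf{x}\rangle$, where the square root is taken coordinatewise and $\circ$ is the coordinatewise product. $\|\cdot\|$ is the Euclidean norm. *)

From HB Require Import structures.
From mathcomp Require Import all_boot all_order all_algebra.
From mathcomp Require Import all_classical all_reals all_analysis.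
Set Implicit Arguments. Unset Strict Implicit. Unset Printing Implicit Defensive.
Import Order.TTheory GRing.Theory Num.Theory.
Import numFieldNormedType.Exports.
Local Open Scope ring_scope.

Section Defs.
Variable R : realType.
Variable d : nat.

Definition dotv (x y : 'rV[R]_d) : R := \sum_(i < d) x ord0 i * y ord0 i.

Definition enorm2 (x : 'rV[R]_d) : R := dotv x x.
Definition enorm (x : 'rV[R]_d) : R := Num.sqrt (enorm2 x).

Definition precond (eps : R) (n : 'rV[R]_d) : 'rV[R]_d :=
  \row_(i < d) (Num.sqrt (n ord0 i) + eps).

Definition hadamard (x y : 'rV[R]_d) : 'rV[R]_d := \row_(i < d) (x ord0 i * y ord0 i).

(* ||x||^2_{sqrt n} := < x, (sqrt n + eps) o x > *)
Definition wnorm2 (eps : R) (n x : 'rV[R]_d) : R :=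
  dotv x (hadamard (precond eps n) x).

Definition is_gradient (f : 'rV[R]_d -> R) (grad : 'rV[R]_d -> 'rV[R]_d) : Prop :=
  forall x, differentiable f x /\ forall h, 'd f x h = dotv (grad x) h.

Definition L_smooth (L : R) (f : 'rV[R]_d -> R) (grad : 'rV[R]_d -> 'rV[R]_d) : Prop :=
  is_gradient f grad /\ forall x y, enorm (grad x - grad y) <= L * enorm (x - y).

End Defs.

From HB Require Import structures.
From mathcomp Require Import all_boot all_order all_algebra.
From mathcomp Require Import all_classical all_reals all_analysis.
From mathcomp Require Import ring lra.
Import Order.TTheory GRing.Theory Num.Theory.
Import numFieldNormedType.Exports.
Set Implicit Arguments. Unset Strict Implicit. Unset Printing Implicit Defensive.
Local Open Scope ring_scope.

(* The proximal subproblem is separable with the coordinatewise weights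
   [p_i = sqrt (n_k)_i + eps], so its minimiser is explicit:
   [theta_{k+1,i} = (p_i theta_{k,i} - eta u_i) / (p_i (1 + eta lamk))].
   The descent lemma for the L-smooth [f] bounds [f theta_{k+1}], and what remains
   splits into one scalar inequality per coordinate in the step
   [D = theta_{k+1,i} - theta_{k,i}]:
   Young's inequality absorbs the gradient error [(g - u) D] into [p D^2 / (2 eta)],
   [3 L eta <= eps] and [eta lam <= 1/10] bound the smoothness and momentum terms by
   [p D^2 / (6 eta)] and [p D^2 / (3 eta)], and the ratio hypothesis gives
   [lamk_{k+1} q_i <= lamk_k p_i] for the new weights [q_i]. *)

Section ScalarStep.
Variable R : realFieldType.

Lemma mul_le_young (a b s : R) : 0 < s -> a * b <= s / 2 * a ^+ 2 + b ^+ 2 / (2 * s).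
Proof.
move=> s0.
have -> : s / 2 * a ^+ 2 + b ^+ 2 / (2 * s) = a * b + (s * a - b) ^+ 2 / (2 * s).
  by field; rewrite gt_eqF.
by rewrite lerDl divr_ge0 ?sqr_ge0 // pmulr_rge0 // ltW.
Qed.

Lemma prox_step_coord_le0 (g u x t p q L e c eta lk lk' : R) :
  t = (p * x - eta * u) / (p * (1 + eta * lk)) ->
  0 < eta -> 0 < e -> e <= p -> p <= c -> 0 <= lk -> eta * lk <= 1 / 10 ->
  3 * L * eta <= e -> 0 <= q -> lk' * q <= lk * p ->
  g * (t - x) + L / 2 * (t - x) ^+ 2 + lk' / 2 * (t * (q * t)) - lk / 2 * (x * (p * x))
  + eta / (4 * c) * (u + lk * (p * x)) ^+ 2 - eta / (2 * e) * (g - u) ^+ 2 <= 0.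
Proof.
move=> ht eta0 e0 ep pc lk0 etalk Le q0 lkq.
have p0 : 0 < p by lra.
set D := t - x; set s := 1 + eta * lk.
have s0 : 0 < s by rewrite /s; nra.
have uE : u = - (p * s * D / eta) - lk * (p * x).
  rewrite /D ht /s; field; rewrite ?mulf_neq0 ?gt_eqF //; lra.
have D2 : 0 <= D ^+ 2 / eta by rewrite divr_ge0 ?sqr_ge0 ?ltW.
have weight : lk' / 2 * (t * (q * t)) <= lk / 2 * (p * t ^+ 2).
  have : lk' * q * t ^+ 2 <= lk * p * t ^+ 2 by rewrite ler_wpM2r ?sqr_ge0.
  have -> : lk' / 2 * (t * (q * t)) = lk' * q * t ^+ 2 / 2 by ring.
  have -> : lk / 2 * (p * t ^+ 2) = lk * p * t ^+ 2 / 2 by ring.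
  lra.
have cross : (g - u) * D - eta / (2 * e) * (g - u) ^+ 2 <= p / 2 * (D ^+ 2 / eta).
  have := mul_le_young (g - u) D (divr_gt0 eta0 e0).
  have -> : eta / (2 * e) = eta / e / 2 by field; lra.
  suff : D ^+ 2 / (2 * (eta / e)) <= p / 2 * (D ^+ 2 / eta) by lra.
  have -> : D ^+ 2 / (2 * (eta / e)) = e / 2 * (D ^+ 2 / eta) by field; lra.
  nra.
have smooth : L / 2 * D ^+ 2 <= p / 6 * (D ^+ 2 / eta).
  have -> : L / 2 * D ^+ 2 = (L * eta) / 2 * (D ^+ 2 / eta) by field; lra.
  nra.
have momentum : eta / (4 * c) * (u + lk * (p * x)) ^+ 2 <= p / 3 * (D ^+ 2 / eta).
  have -> : eta / (4 * c) * (u + lk * (p * x)) ^+ 2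
            = p * (p / c) * s ^+ 2 / 4 * (D ^+ 2 / eta).
    by rewrite uE; field; lra.
  rewrite ler_wpM2r //.
  have pc1 : p / c <= 1 by rewrite ler_pdivrMr; lra.
  have s2 : s ^+ 2 <= 121 / 100.
    have elk0 : 0 <= eta * lk by rewrite mulr_ge0 // ltW.
    rewrite /s expr2; nra.
  have ps2 : p / c * s ^+ 2 <= 121 / 100.
    by have := sqr_ge0 s; nra.
  have -> : p * (p / c) * s ^+ 2 / 4 = p * (p / c * s ^+ 2) / 4 by ring.
  nra.
have key : u * D + lk / 2 * (p * t ^+ 2) - lk / 2 * (x * (p * x))
           = - p * (D ^+ 2 / eta) - lk * p * D ^+ 2 / 2.
  have tE : t = x + D by rewrite /D addrC subrK.
  by rewrite uE tE /s; field; lra.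
have : 0 <= lk * p * D ^+ 2 by rewrite mulr_ge0 ?sqr_ge0 // mulr_ge0 // ltW.
lra.
Qed.
End ScalarStep.

Section Euclidean.
Variables (R : realType) (d : nat).
Implicit Types a b c : 'rV[R]_d.

Lemma dotvC a b : dotv a b = dotv b a.
Proof. by apply: eq_bigr => i _; rewrite mulrC. Qed.

Lemma dotvBl a b c : dotv (a - b) c = dotv a c - dotv b c.
Proof. by rewrite /dotv -sumrB; apply: eq_bigr => i _; rewrite !mxE mulrBl. Qed.

Lemma dotvZl (s : R) a b : dotv (s *: a) b = s * dotv a b.
Proof. by rewrite /dotv mulr_sumr; apply: eq_bigr => i _; rewrite !mxE mulrA. Qed.

Lemma dotvZr (s : R) a b : dotv a (s *: b) = s * dotv a b.
Proof. by rewrite dotvC dotvZl dotvC. Qed.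

Lemma enorm2_ge0 a : 0 <= enorm2 a.
Proof. by apply: sumr_ge0 => i _; rewrite -expr2 sqr_ge0. Qed.

Lemma sqr_enorm a : enorm a ^+ 2 = enorm2 a.
Proof. by rewrite sqr_sqrtr // enorm2_ge0. Qed.

Lemma enormZ (s : R) a : enorm (s *: a) = `|s| * enorm a.
Proof.
by rewrite /enorm /enorm2 dotvZl dotvZr mulrA -expr2 sqrtrM ?sqr_ge0 // sqrtr_sqr.
Qed.

Lemma dotv_enorm2_eq0 a b : enorm2 a = 0 -> dotv a b = 0.
Proof.
move=> /psumr_eq0P a0; rewrite /dotv big1 // => i _.
have /eqP : a ord0 i * a ord0 i = 0 by apply: a0 => // j _; rewrite -expr2 sqr_ge0.
by rewrite mulf_eq0 orbb => /eqP ->; rewrite mul0r.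
Qed.

Lemma dotv_le_enorm a b : dotv a b <= enorm a * enorm b.
Proof.
set A := enorm a; set B := enorm b.
have AB0 : 0 <= A * B by rewrite mulr_ge0 ?sqrtr_ge0.
have [ABgt0|] := ltrP 0 (A * B).
  rewrite -(ler_pM2r ABgt0) -expr2 -(ler_pM2l (ltr0Sn _ 1)).
  have -> : 2 * (A * B) ^+ 2 = B ^+ 2 * enorm2 a + A ^+ 2 * enorm2 b.
    by rewrite -!sqr_enorm -/A -/B; ring.
  rewrite /enorm2 /dotv mulr_suml !mulr_sumr -big_split /=.
  apply: ler_sum => i _.
  by have := sqr_ge0 (a ord0 i * B - b ord0 i * A); nra.
rewrite le_eqVlt ltNge AB0 orbF mulf_eq0 => /orP[] /eqP norm0.
- by rewrite dotv_enorm2_eq0 ?mul0r // -sqr_enorm -/A norm0 expr0n.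
- by rewrite dotvC dotv_enorm2_eq0 ?mulr0 // -sqr_enorm -/B norm0 expr0n.
Qed.

End Euclidean.

Section Descent.
Variables (R : realType) (d : nat).
Variables (f : 'rV[R]_d -> R) (grad : 'rV[R]_d -> 'rV[R]_d).

Lemma is_derive_along_line (x D : 'rV[R]_d) (t : R) : is_gradient f grad ->
  is_derive t 1 (fun s => f (s *: D + x)) (dotv (grad (t *: D + x)) D).
Proof.
move=> /(_ (t *: D + x)) [df dfE].
set phi := fun s => f (s *: D + x).
have quotE : (fun h : R => h^-1 *: ((phi \o shift t) (h *: 1) - phi t)) =
    (fun h : R => h^-1 *: ((f \o shift (t *: D + x)) (h *: D) - f (t *: D + x))).
  by apply: funext => h; rewrite /phi /= [h *: 1]mulr1 scalerDl addrA.
apply: DeriveDef.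
  by have := @diff_derivable _ _ _ f _ D df; rewrite /derivable quotE.
by rewrite /derive quotE -/(derive f (t *: D + x) D) deriveE.
Qed.

Lemma L_smooth_upper_bound (L : R) x y : L_smooth L f grad ->
  f y <= f x + dotv (grad x) (y - x) + L / 2 * enorm2 (y - x).
Proof.
move=> [gradf lip]; set D := y - x.
set K1 := dotv (grad x) D; set K2 := L / 2 * enorm2 D.
(* [psi 1 <= psi 0] by the mean value theorem, since [psi' <= 0] on [0, 1]. *)
pose psi := (fun s => f (s *: D + x)) - K1 \*: (@id R) - K2 \*: ((@id R) * (@id R)).
pose dpsi t :=
  dotv (grad (t *: D + x)) D - K1 *: (1 : R) - K2 *: (t *: (1 : R) + t *: (1 : R)).
have phi' (t : R) := is_derive_along_line x D t gradf.
have psi' (t : R) : is_derive t 1 psi (dpsi t) by apply: is_deriveB.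
have [c c01 mvt] : exists2 c, c \in `[0, 1]%R & psi 1 - psi 0 = dpsi c * (1 - 0).
  apply: MVT_segment => //; apply: derivable_within_continuous => z _.
  exact: (@ex_derive _ _ _ _ _ _ _ (psi' z)).
have c0 : 0 <= c by move: c01; rewrite in_itv /= => /andP[].
have dpsi_le0 : dpsi c <= 0.
  have := dotv_le_enorm (grad (c *: D + x) - grad x) D; rewrite dotvBl -/K1.
  have := lip (c *: D + x) x; rewrite addrK enormZ ger0_norm //.
  have nD : 0 <= enorm D := sqrtr_ge0 _.
  move=> /(ler_wpM2r nD).
  have -> : L * (c * enorm D) * enorm D = L * c * enorm2 D by rewrite -sqr_enorm; ring.
  rewrite /dpsi /K2 /GRing.scale /=; lra.
have psi1 : psi 1 = f y - K1 - K2.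
  by change (f (1 *: D + x) - K1 * 1 - K2 * (1 * 1) = f y - K1 - K2);
    rewrite scale1r /D subrK !mulr1.
have psi0 : psi 0 = f x.
  by change (f (0 *: D + x) - K1 * 0 - K2 * (0 * 0) = f x);
    rewrite scale0r add0r !mulr0 !subr0.
by move: mvt; rewrite subr0 mulr1 psi1 psi0; lra.
Qed.

End Descent.

Section ProximalStep.
Variables (R : realType) (d : nat).
Variables (p u x : 'rV[R]_d) (lk eta c : R).
Hypotheses (p_gt0 : forall i, 0 < p ord0 i) (eta_gt0 : 0 < eta) (lk_ge0 : 0 <= lk).

Definition prox_obj (y : 'rV[R]_d) : R :=
  lk / 2 * dotv y (hadamard p y) + c + dotv u (y - x)
  + 1 / (2 * eta) * dotv (y - x) (hadamard p (y - x)).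

Definition prox_point : 'rV[R]_d :=
  \row_i ((p ord0 i * x ord0 i - eta * u ord0 i) / (p ord0 i * (1 + eta * lk))).

Lemma dotv_hadamardE (a b : 'rV[R]_d) :
  dotv a (hadamard p b) = \sum_(i < d) a ord0 i * (p ord0 i * b ord0 i).
Proof. by apply: eq_bigr => i _; rewrite mxE. Qed.

Lemma prox_objE y : prox_obj y = c + \sum_(i < d)
  (lk / 2 * (y ord0 i * (p ord0 i * y ord0 i)) + u ord0 i * (y - x) ord0 i
   + 1 / (2 * eta) * ((y - x) ord0 i * (p ord0 i * (y - x) ord0 i))).
Proof. by rewrite /prox_obj !dotv_hadamardE /dotv !big_split /= -!mulr_sumr; ring. Qed.

Lemma prox_obj_sqr y : prox_obj y = prox_obj prox_point
  + \sum_(i < d) (lk / 2 + 1 / (2 * eta)) * p ord0 i * (y - prox_point) ord0 i ^+ 2.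
Proof.
rewrite !prox_objE -addrA -big_split /=; congr (_ + _); apply: eq_bigr => i _.
have := p_gt0 i; rewrite /prox_point !mxE => pi0.
have elk : 0 <= eta * lk by rewrite mulr_ge0 // ltW.
by field; rewrite !gt_eqF //; lra.
Qed.

Lemma prox_point_unique z : (forall y, prox_obj z <= prox_obj y) -> z = prox_point.
Proof.
move=> zmin; have := zmin prox_point; rewrite prox_obj_sqr gerDl => sum_le0.
have coef_gt0 i : 0 < (lk / 2 + 1 / (2 * eta)) * p ord0 i.
  by rewrite mulr_gt0 // ltr_wpDl ?divr_ge0 ?divr_gt0 ?mulr_gt0.
have term_ge0 i : true ->
    0 <= (lk / 2 + 1 / (2 * eta)) * p ord0 i * (z - prox_point) ord0 i ^+ 2.
  by move=> _; rewrite mulr_ge0 ?sqr_ge0 ?ltW.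
have sum_eq0 :
    \sum_(i < d) (lk / 2 + 1 / (2 * eta)) * p ord0 i * (z - prox_point) ord0 i ^+ 2 = 0.
  by apply/eqP; rewrite eq_le sum_le0 sumr_ge0.
apply/rowP => i; apply/eqP; rewrite -subr_eq0.
have /eqP := psumr_eq0P term_ge0 sum_eq0 (i := i) isT.
by rewrite mulf_eq0 (gt_eqF (coef_gt0 i)) sqrf_eq0 !mxE.
Qed.

End ProximalStep.

Lemma prox_point_decrease (R : realType) (d : nat) (p q u x z g : 'rV[R]_d)
    (L e c eta lk lk' : R) :
  z = prox_point p u x lk eta -> 0 < eta -> 0 < e -> (forall i, e <= p ord0 i <= c) ->
  0 <= lk -> eta * lk <= 1 / 10 -> 3 * L * eta <= e ->
  (forall i, 0 <= q ord0 i) -> (forall i, lk' * q ord0 i <= lk * p ord0 i) ->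
  dotv g (z - x) + L / 2 * enorm2 (z - x) + lk' / 2 * dotv z (hadamard q z)
  - lk / 2 * dotv x (hadamard p x) + eta / (4 * c) * enorm2 (u + lk *: hadamard p x)
  - eta / (2 * e) * enorm2 (g - u) <= 0.
Proof.
move=> -> eta0 e0 p_bd lk0 etalk Le q0 lkq.
rewrite /enorm2 /dotv !mulr_sumr -!big_split -!sumrB -!big_split -!sumrB /=.
apply: sumr_le0 => i _; have /andP[ep pc] := p_bd i.
rewrite /prox_point !mxE -!expr2.
exact: prox_step_coord_le0.
Qed.

Lemma precond_ge_eps (R : realType) (d : nat) (eps : R) (n : 'rV[R]_d) i :
  eps <= precond eps n ord0 i.
Proof. by rewrite mxE lerDr sqrtr_ge0. Qed.

Theorem mainTheorem3 (R : realType) (d : nat)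
  (f : 'rV[R]_d -> R) (grad : 'rV[R]_d -> 'rV[R]_d) (L : R)
  (eps cinf lam mu eta : R)
  (n theta u : nat -> 'rV[R]_d) :
  0 <= L -> L_smooth L f grad ->
  0 < eps -> 0 < cinf -> 0 < lam -> 0 <= mu -> mu < 1 ->
  (forall k (i : 'I_d), 0 <= n k ord0 i) ->
  (forall k (i : 'I_d), Num.sqrt (n k ord0 i) + eps <= cinf) ->
  (forall k (i : 'I_d),
     (Num.sqrt (n k ord0 i) + eps) / (Num.sqrt (n k.+1 ord0 i) + eps) >= 1 - mu) ->
  0 < eta -> 3 * L * eta <= eps -> eta <= 1 / (10 * lam) ->
  let lamk := fun k : nat => lam * (1 - mu) ^+ k in
  let F := fun (k : nat) (th : 'rV[R]_d) => f th + lamk k / 2 * wnorm2 eps (n k) th in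
  forall k : nat,
  (forall th : 'rV[R]_d,
     lamk k / 2 * wnorm2 eps (n k) (theta k.+1) + f (theta k)
       + dotv (u k) (theta k.+1 - theta k)
       + 1 / (2 * eta) * wnorm2 eps (n k) (theta k.+1 - theta k)
     <= lamk k / 2 * wnorm2 eps (n k) th + f (theta k)
       + dotv (u k) (th - theta k)
       + 1 / (2 * eta) * wnorm2 eps (n k) (th - theta k)) ->
  F k.+1 (theta k.+1)
    <= F k (theta k)
       - eta / (4 * cinf) * enorm2 (u k + lamk k *: hadamard (precond eps (n k)) (theta k))
       + eta / (2 * eps) * enorm2 (grad (theta k) - u k).
Proof.
move=> _ smooth eps0 _ lam0 mu0 mu1 _ le_cinf ratio eta0 Leta etalam lamk F k thmin.
set p := precond eps (n k); set q := precond eps (n k.+1).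
have pow_ge0 : 0 <= (1 - mu) ^+ k by rewrite exprn_ge0 // subr_ge0 ltW.
have pow_le1 : (1 - mu) ^+ k <= 1 by rewrite exprn_ile1 //; lra.
have lk0 : 0 <= lamk k by rewrite mulr_ge0 // ltW.
have etalk : eta * lamk k <= 1 / 10.
  have : eta * (10 * lam) <= 1 by rewrite -ler_pdivlMr ?mulr_gt0.
  rewrite /lamk; nra.
have p_bd i : eps <= p ord0 i <= cinf by rewrite precond_ge_eps /p mxE le_cinf.
have lkq i : lamk k.+1 * q ord0 i <= lamk k * p ord0 i.
  have q_gt0 : 0 < q ord0 i := lt_le_trans eps0 (precond_ge_eps _ _ _).
  move: (ratio k i) q_gt0; rewrite /p /q !mxE => ratio_ki q_gt0.
  rewrite ler_pdivlMr // in ratio_ki.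
  by rewrite /lamk exprSr mulrA -mulrA ler_wpM2l.
have thE : theta k.+1 = prox_point p (u k) (theta k) (lamk k) eta.
  apply: (prox_point_unique (c := f (theta k))) thmin => // i.
  exact: lt_le_trans eps0 (precond_ge_eps _ _ _).
have := L_smooth_upper_bound (theta k) (theta k.+1) smooth.
have := prox_point_decrease (grad (theta k)) thE eta0 eps0 p_bd lk0 etalk Leta
  (fun i => le_trans (ltW eps0) (precond_ge_eps _ _ i)) lkq.
rewrite /F /wnorm2 -/p -/q; lra.
Qed.
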